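(* Let $B$ be a finite index subring of a finite product of principal ideal domains. Let $N$ be a quadratically presented $B$-module such that $\mathrm{Fitt}_B(N)=(x)$ for some non-zerodivisor $x\in B$, and suppose $B/(x)$ is finite. Then $N$ is finite and $\#N=\#B/(x)$.
   Context: A module $N$ over a commutative ring $B$ is quadratically presented if there exist $m\ge1$ and an exact sequence $B^m\to B^m\to N\to0$. $\mathrm{Fitt}_B$ denotes the $0$th Fitting ideal. *)

From HB Require Import structures.
From mathcomp Require Import all_boot all_order all_algebra.
Set Implicit Arguments. Unset Strict Implicit. Unset Printing Implicit Defensive.
Import Order.TTheory GRing.Theory Num.Theory.
Local Open Scope ring_scope.

Definition is_ideal (R : comPzRingType) (I : R -> Prop) : Prop :=
  [/\ I 0, (forall a b, I a -> I b -> I (a + b)), (forall a, I a -> I (- a))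
    & (forall r a, I a -> I (r * a))].

Definition is_PID (R : idomainType) : Prop :=
  forall I : R -> Prop, is_ideal I -> exists d : R, forall a, I a <-> exists r, a = r * d.

(* B is (isomorphic to) a finite index subring of the finite product
   prod_{i < n} R i of PIDs: phi = (phi i)_i is an injective ring morphism
   B -> prod_i R i whose image has finite index (as additive subgroup). *)
Definition finite_index_subring_of_prod (B : comPzRingType) (n : nat)
  (R : 'I_n -> idomainType) (phi : forall i, {rmorphism B -> R i}) : Prop :=
  (forall a b : B, (forall i, phi i a = phi i b) -> a = b) /\
  exists (k : nat) (F : 'I_k -> forall i, R i),
    forall y : forall i, R i, exists (j : 'I_k) (b : B), forall i, y i = F j i + phi i b.

(* (g, A) is a finite presentation B^k --A--> B^m --g--> N --> 0 (row-vector convention):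
   g is surjective and its kernel is the row space of A. *)
Definition is_presentation (B : comPzRingType) (N : lmodType B) (k m : nat)
  (A : 'M[B]_(k, m)) (g : {linear 'rV[B]_m -> N}) : Prop :=
  (forall y : N, exists v, g v = y) /\
  (forall v : 'rV[B]_m, g v = 0 <-> exists u : 'rV[B]_k, v = u *m A).

Definition quadratically_presented (B : comPzRingType) (N : lmodType B) : Prop :=
  exists (m : nat) (A : 'M[B]_m) (g : {linear 'rV[B]_m -> N}),
    (1 <= m)%N /\ is_presentation A g.

(* The ideal of B generated by the m x m minors of a k x m matrix A. *)
Definition minor_ideal (B : comPzRingType) (k m : nat) (A : 'M[B]_(k, m)) (b : B) : Prop :=
  exists c : {ffun {ffun 'I_m -> 'I_k} -> B},
    b = \sum_(f : {ffun 'I_m -> 'I_k}) c f * \det (rowsub f A).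

(* Fitt_B(N) = I : the 0th Fitting ideal of N (computed from any finite presentation;
   it is independent of the presentation) is the ideal I. *)
Definition Fitt0_is (B : comPzRingType) (N : lmodType B) (I : B -> Prop) : Prop :=
  forall (k m : nat) (A : 'M[B]_(k, m)) (g : {linear 'rV[B]_m -> N}),
    is_presentation A g -> forall b, minor_ideal A b <-> I b.

Definition principal_ideal (B : comPzRingType) (x : B) (b : B) : Prop :=
  exists r, b = r * x.

Definition non_zerodivisor (B : comPzRingType) (x : B) : Prop :=
  forall b, x * b = 0 -> b = 0.

Definition has_card (T : eqType) (c : nat) : Prop :=
  exists s : seq T, uniq s /\ (forall t, t \in s) /\ size s = c.

Definition quot_card (B : comPzRingType) (x : B) (c : nat) : Prop :=
  exists s : seq B,
    [/\ size s = c,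
        (forall i j, (i < c)%N -> (j < c)%N -> principal_ideal x (s`_i - s`_j) -> i = j)
      & (forall b, exists2 i, (i < c)%N & principal_ideal x (b - s`_i))].

From HB Require Import structures.
From mathcomp Require Import all_boot all_order all_algebra ring.
From Stdlib Require Import ClassicalEpsilon.
Set Implicit Arguments. Unset Strict Implicit. Unset Printing Implicit Defensive.
Import GRing.Theory.
Local Open Scope ring_scope.

(* Write N = B^m / B^m A with a square relation matrix A acting on row vectors.
   The Fitting ideal of N is (det A), so (det A) = (x) and it suffices to show
   [B^m : B^m A] = [B : (det A)].  Send B^m to W = prod_i R_i^m, keeping the factors
   where det A does not vanish: the image has finite index, and right multiplication
   by A is injective on W and extends the one on B^m, so [B^m : B^m A] = [W : W A];
   likewise [B : (det A)] = [prod_i R_i : (det A)].  Over a PID, Bezout row operations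
   make A block triangular, whence [R^m : R^m A] = [R : (det A)] by induction on m;
   taking the product over i gives the claim. *)

Lemma dependent_choice (I : Type) (T : I -> Type) (P : forall i, T i -> Prop) :
  (forall i, exists y, P i y) -> exists f : forall i, T i, forall i, P i (f i).
Proof.
move=> h; exists (fun i => sval (constructive_indefinite_description _ (h i))).
by move=> i; exact: svalP.
Qed.

Definition pbool (P : Prop) : bool := if excluded_middle_informative P then true else false.

Lemma pboolP P : reflect P (pbool P).
Proof. by rewrite /pbool; case: excluded_middle_informative => h; constructor. Qed.

Notation whole := (fun _ => True).

(** * Indices of subgroups *)

Section Index.
Variable G : zmodType.
Implicit Types H K : G -> Prop.

Definition subgroup K := K 0 /\ forall a b, K a -> K b -> K (a - b).

(* [has_index H K n]: [H] meets exactly [n] cosets of [K]; [s] is a transversal. *)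
Definition has_index H K n :=
  exists (I : finType) (s : I -> G), [/\ #|I| = n, forall i, H (s i),
    forall i j, K (s i - s j) -> i = j & forall g, H g -> exists i, K (g - s i)].

Lemma subgroup_whole : subgroup whole. Proof. by []. Qed.

Lemma has_index_ext H K H' K' n : (forall g, H g <-> H' g) -> (forall g, K g <-> K' g) ->
  has_index H K n -> has_index H' K' n.
Proof.
move=> eH eK [I [s [cardI Hs s_inj s_cover]]]; exists I, s; split=> //.
- by move=> i; apply/eH.
- by move=> i j /eK; apply: s_inj.
- by move=> g /eH /s_cover [i /eK]; exists i.
Qed.

Lemma has_index_iff H K H' K' n : (forall g, H g <-> H' g) -> (forall g, K g <-> K' g) ->
  has_index H K n <-> has_index H' K' n.
Proof.
move=> eH eK; split; apply: has_index_ext => g; by [apply: eH | apply: eK | apply: iff_sym].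
Qed.

Variable K : G -> Prop.
Hypothesis sK : subgroup K.

Lemma subgroup0 : K 0. Proof. by case: sK. Qed.

Lemma subgroupB a b : K a -> K b -> K (a - b). Proof. by case: sK => _; apply. Qed.

Lemma subgroupN a : K a -> K (- a).
Proof. by move=> Ka; rewrite -sub0r; apply: subgroupB => //; exact: subgroup0. Qed.

Lemma subgroupD a b : K a -> K b -> K (a + b).
Proof. by move=> Ka Kb; have := subgroupB Ka (subgroupN Kb); rewrite opprK. Qed.

Lemma subgroup_sym a b : K (a - b) -> K (b - a).
Proof. by move=> Kab; rewrite -opprB; apply: subgroupN. Qed.

Lemma subgroup_trans b a c : K (a - b) -> K (b - c) -> K (a - c).
Proof. by move=> Kab Kbc; have := subgroupD Kab Kbc; rewrite addrA subrK. Qed.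

Lemma has_index_leq H n1 n2 : has_index H K n1 -> has_index H K n2 -> (n1 <= n2)%N.
Proof.
case=> [I [s [<- Hs s_inj _]]] [J [t [<- _ _ t_cover]]].
have [f fP] := dependent_choice (fun i => t_cover _ (Hs i)).
apply: (@leq_card _ _ f) => i j fij; apply: s_inj.
by apply: (subgroup_trans (fP i)); rewrite fij; apply: subgroup_sym.
Qed.

Lemma has_index_unique H n1 n2 : has_index H K n1 -> has_index H K n2 -> n1 = n2.
Proof.
by move=> h1 h2; apply/eqP; rewrite eqn_leq (has_index_leq h1 h2) (has_index_leq h2 h1).
Qed.

Lemma has_index_refl : has_index K K 1.
Proof.
exists unit, (fun _ => 0); split; rewrite ?card_unit //; first by move=> _; exact: subgroup0.
  by move=> [] [].
by move=> g Kg; exists tt; rewrite subr0.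
Qed.

Lemma has_index_gt0 H n : H 0 -> has_index H K n -> (0 < n)%N.
Proof.
by move=> H0 [I [s [<- _ _ s_cover]]]; have [i _] := s_cover 0 H0; apply/card_gt0P; exists i.
Qed.

Lemma has_index_ord H n : has_index H K n -> exists s : 'I_n -> G,
  [/\ forall i, H (s i), forall i j, K (s i - s j) -> i = j
    & forall g, H g -> exists i, K (g - s i)].
Proof.
case=> [I [s [<- Hs s_inj s_cover]]]; exists (fun k => s (enum_val k)); split=> //.
- by move=> i j /s_inj /enum_val_inj.
- by move=> g /s_cover [i Ki]; exists (enum_rank i); rewrite enum_rankK.
Qed.

(* The transversal keeps, in each class met by [H], the point of least rank. *)
Lemma has_index_of_cover H (I : finType) (f : I -> G) :
  (forall g, H g -> exists i, K (g - f i)) -> exists n, has_index H K n.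
Proof.
move=> f_cover.
pose hit i := exists g, H g /\ K (g - f i).
pose least i := hit i /\ forall j, hit j -> K (f i - f j) -> (enum_rank i <= enum_rank j)%N.
pose J : finType := {i : I | pbool (least i)}.
have leastJ (j : J) : least (val j) by apply/pboolP; exact: valP j.
have [s sP] := dependent_choice (fun j => (leastJ j).1).
exists #|J|, J, s; split=> //.
- by move=> j; case: (sP j).
- move=> j j' Kjj'; apply: val_inj; apply: enum_rank_inj; apply: val_inj.
  have Kf : K (f (val j) - f (val j')).
    apply: (subgroup_trans (subgroup_sym (sP j).2)).
    exact: subgroup_trans Kjj' (sP j').2.
  apply/eqP; rewrite eqn_leq ((leastJ j).2 _ (leastJ j').1 Kf).
  by rewrite ((leastJ j').2 _ (leastJ j).1 (subgroup_sym Kf)).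
- move=> g Hg; have [i0 Ki0] := f_cover g Hg.
  pose P i := pbool (hit i /\ K (f i - f i0)).
  have P_i0 : P i0.
    by apply/pboolP; split; [exists g | rewrite subrr; exact: subgroup0].
  case: (@arg_minnP _ _ P (fun i => enum_rank i : nat) P_i0) => i /pboolP [hit_i Ki] i_min.
  have least_i : least i.
    split=> // j hit_j Kij; apply: i_min; apply/pboolP; split=> //.
    exact: subgroup_trans (subgroup_sym Kij) Ki.
  have Ji : pbool (least i) by apply/pboolP.
  exists (exist _ i Ji); apply: (subgroup_trans Ki0); apply: (subgroup_trans (subgroup_sym Ki)).
  exact: subgroup_sym (sP (exist _ i Ji)).2.
Qed.
End Index.

Section Tower.
Variables (G : zmodType) (H K L : G -> Prop).
Hypotheses (sH : subgroup H) (sK : subgroup K) (sL : subgroup L).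
Hypotheses (LK : forall g, L g -> K g) (KH : forall g, K g -> H g).

Lemma has_index_mul a b : has_index H K a -> has_index K L b -> has_index H L (a * b)%N.
Proof.
case=> [I [s [<- Hs s_inj s_cover]]] [J [t [<- Kt t_inj t_cover]]].
exists (I * J)%type, (fun p => s p.1 + t p.2); split.
- by rewrite card_prod.
- by move=> [i j] /=; apply: subgroupD => //; apply: KH.
- move=> [i j] [i' j'] /=; rewrite opprD addrACA => Lst.
  have Kss : K (s i - s i').
    rewrite -(addrK (t j - t j') (s i - s i')).
    by apply: subgroupB => //; [apply: LK | apply: subgroupB].
  have ii' := s_inj _ _ Kss; subst i'.
  by rewrite subrr add0r in Lst; rewrite (t_inj _ _ Lst).
- move=> g Hg; have [i Ki] := s_cover g Hg; have [j Lj] := t_cover _ Ki.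
  by exists (i, j); rewrite /= opprD addrA.
Qed.

Lemma has_index_factor N : has_index H L N ->
  exists a b, [/\ has_index H K a, has_index K L b & N = (a * b)%N].
Proof.
move=> hN; have [I [s [_ Hs _ s_cover]]] := hN.
have [a ha] : exists a, has_index H K a.
  by apply: (has_index_of_cover sK (f := s)) => g /s_cover [i Li]; exists i; apply: LK.
have [b hb] : exists b, has_index K L b.
  by apply: (has_index_of_cover sL (f := s)) => g /KH /s_cover.
by exists a, b; split=> //; exact: (has_index_unique sL hN (has_index_mul ha hb)).
Qed.
End Tower.

Section Image.
Variables (G1 G2 : zmodType) (f : {additive G1 -> G2}).

Definition img (P : G1 -> Prop) (y : G2) := exists x, P x /\ y = f x.

Lemma subgroup_img P : subgroup P -> subgroup (img P).
Proof.
move=> sP; split; first by exists 0; rewrite raddf0; split=> //; exact: subgroup0.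
by move=> _ _ [a [Pa ->]] [b [Pb ->]]; exists (a - b); rewrite raddfB; split=> //; apply: subgroupB.
Qed.

Variables H K : G1 -> Prop.
Hypotheses (sH : subgroup H) (sK : subgroup K) (KH : forall g, K g -> H g).
Hypothesis ker_f : forall x, H x -> f x = 0 -> K x.

Lemma img_cong x y : H x -> H y -> img K (f x - f y) -> K (x - y).
Proof.
move=> Hx Hy [z [Kz e]].
have f0 : f (x - y - z) = 0 by rewrite !raddfB /= e subrr.
have := subgroupD sK (ker_f (subgroupB sH (subgroupB sH Hx Hy) (KH Kz)) f0) Kz.
by rewrite subrK.
Qed.

Lemma has_index_img n : has_index (img H) (img K) n <-> has_index H K n.
Proof.
split.
- case=> [I [t [<- Ht t_inj t_cover]]].
  have [s sP] := dependent_choice Ht.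
  exists I, s; split=> //.
  + by move=> i; case: (sP i).
  + move=> i j Kij; apply: t_inj; rewrite (sP i).2 (sP j).2.
    by exists (s i - s j); rewrite raddfB.
  + move=> x Hx; have [|i Ki] := t_cover (f x); first by exists x.
    by exists i; apply: img_cong (sP i).1 _ => //; rewrite -(sP i).2.
- case=> [I [s [<- Hs s_inj s_cover]]]; exists I, (fun i => f (s i)); split=> //.
  + by move=> i; exists (s i).
  + by move=> i j /(img_cong (Hs i) (Hs j)); apply: s_inj.
  + move=> _ [x [Hx ->]]; have [i Ki] := s_cover x Hx.
    by exists i; exists (x - s i); rewrite raddfB.
Qed.
End Image.

Lemma has_index_restrict (G : zmodType) (H H1 K : G -> Prop) n :
  subgroup H1 -> subgroup K -> (forall g, H1 g -> H g) ->
  (forall h, H h -> exists h1, H1 h1 /\ K (h - h1)) ->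
  has_index H1 (fun g => H1 g /\ K g) n -> has_index H K n.
Proof.
move=> sH1 sK H1H H_cover [I [s [cardI H1s s_inj s_cover]]]; exists I, s; split=> //.
- by move=> i; apply: H1H.
- by move=> i j Kij; apply: s_inj; split=> //; apply: subgroupB.
- move=> g Hg; have [h1 [H1h Kh]] := H_cover g Hg; have [i [_ Ki]] := s_cover h1 H1h.
  by exists i; exact: (subgroup_trans sK Kh Ki).
Qed.

Section Product.
Variables (I : finType) (G : I -> zmodType).

Definition zprod := {dffun forall i, G i}.

Definition zprod_add (a b : zprod) : zprod := [ffun i => a i + b i].
Definition zprod_opp (a : zprod) : zprod := [ffun i => - a i].

Lemma zprod_addA : associative zprod_add.
Proof. by move=> a b c; apply/ffunP=> i; rewrite !ffunE addrA. Qed.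
Lemma zprod_addC : commutative zprod_add.
Proof. by move=> a b; apply/ffunP=> i; rewrite !ffunE addrC. Qed.
Lemma zprod_add0 : left_id [ffun i => 0] zprod_add.
Proof. by move=> a; apply/ffunP=> i; rewrite !ffunE add0r. Qed.
Lemma zprod_addN : left_inverse [ffun i => 0] zprod_opp zprod_add.
Proof. by move=> a; apply/ffunP=> i; rewrite !ffunE addNr. Qed.

Definition choice_at (i : I) : choiceType := G i.
HB.instance Definition _ := Choice.copy zprod {dffun forall i, choice_at i}.
HB.instance Definition _ := GRing.isZmodule.Build zprod zprod_addA zprod_addC zprod_add0 zprod_addN.

Lemma zprod0E i : (0 : zprod) i = 0. Proof. by rewrite ffunE. Qed.
Lemma zprodBE (a b : zprod) i : (a - b) i = a i - b i. Proof. by rewrite !ffunE. Qed.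

Definition prod_pred (P : forall i, G i -> Prop) (w : zprod) := forall i, P i (w i).

Local Unset Implicit Arguments.
Variables H K : forall i, G i -> Prop.
Local Set Implicit Arguments.
Hypotheses (sH : forall i, subgroup (H i)) (sK : forall i, subgroup (K i)).

Lemma subgroup_prod_pred P : (forall i, subgroup (P i)) -> subgroup (prod_pred P).
Proof.
move=> sP; split; first by move=> i; rewrite zprod0E; exact: subgroup0.
by move=> a b Pa Pb i; rewrite zprodBE; apply: subgroupB.
Qed.

Lemma has_index_prod_pred_mul (n : I -> nat) : (forall i, has_index (H i) (K i) (n i)) ->
  has_index (prod_pred H) (prod_pred K) (\prod_i n i)%N.
Proof.
move=> hn; have [s sP] := dependent_choice (fun i => has_index_ord (hn i)).
pose t (J : {dffun forall i, 'I_(n i)}) : zprod := [ffun i => s i (J i)].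
exists {dffun forall i, 'I_(n i)}, t; split.
- by rewrite card_dep_ffun foldrE big_map big_enum; apply: eq_bigr => i _; rewrite card_ord.
- by move=> J i; rewrite ffunE; case: (sP i).
- move=> J J' KJ; apply/ffunP=> i; case: (sP i) => _ s_inj _; apply: s_inj.
  by have := KJ i; rewrite zprodBE !ffunE.
- move=> w Hw.
  have [J JP] : exists J : forall i, 'I_(n i), forall i, K i (w i - s i (J i)).
    apply: (dependent_choice (P := fun i k => K i (w i - s i k))) => i.
    by case: (sP i) => _ _; apply; apply: Hw.
  by exists [ffun i => J i] => i; rewrite zprodBE !ffunE.
Qed.

Lemma has_index_prod_pred N : has_index (prod_pred H) (prod_pred K) N <->
  exists2 n : I -> nat, (forall i, has_index (H i) (K i) (n i)) & N = (\prod_i n i)%N.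
Proof.
split=> [hN | [n hn ->]]; last exact: has_index_prod_pred_mul.
have hn i : exists n, has_index (H i) (K i) n.
  have [J [s [_ _ _ s_cover]]] := hN.
  apply: (has_index_of_cover (sK i) (f := fun j => s j i)) => y Hy.
  pose w : zprod := [ffun j => dfwith (fun j => 0 : G j) y j].
  have [|j Kj] := s_cover w; last by exists j; have := Kj i; rewrite zprodBE ffunE dfwith_in.
  by move=> j; rewrite ffunE; case: dfwithP => //= j' _; exact: subgroup0.
have [n {}hn] := dependent_choice hn.
exists n => //.
exact: (has_index_unique (subgroup_prod_pred sK) hN (has_index_prod_pred_mul hn)).
Qed.
End Product.

(* Both indices equal [W : iota (f V)] / [W : iota V], computed along the chains
   [W ⊇ iota V ⊇ iota (f V)] and [W ⊇ h W ⊇ h (iota V) = iota (f V)]. *)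
Section Intertwine.
Variables (V W : zmodType) (iota : {additive V -> W}).
Variables (f : {additive V -> V}) (h : {additive W -> W}).
Hypotheses (iota_inj : injective iota) (h_inj : injective h).
Hypothesis h_iota : forall v, h (iota v) = iota (f v).
Variable q : nat.
Hypothesis iota_index : has_index whole (img iota whole) q.

Let sV := subgroup_img f (@subgroup_whole V).
Let sI := subgroup_img iota (@subgroup_whole V).
Let sIf := subgroup_img iota sV.
Let sH := subgroup_img h (@subgroup_whole W).

Let If_I w : img iota (img f whole) w -> img iota whole w.
Proof. by case=> x [_ ->]; exists x. Qed.

Let If_H w : img iota (img f whole) w -> img h whole w.
Proof. by case=> _ [[u [_ ->]] ->]; exists (iota u); rewrite h_iota. Qed.

Let ker_trivial (U Z : zmodType) (g : {additive U -> Z}) (P : U -> Prop) :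
  injective g -> P 0 -> forall x, True -> g x = 0 -> P x.
Proof. by move=> g_inj P0 x _; rewrite -(raddf0 g) => /g_inj ->. Qed.

Let index_If c : has_index whole (img f whole) c <->
  has_index (img iota whole) (img iota (img f whole)) c.
Proof.
apply: iff_sym; apply: has_index_img => //; exact: ker_trivial iota_inj (subgroup0 sV).
Qed.

Let index_H_If : has_index (img h whole) (img iota (img f whole)) q.
Proof.
have ker_h := ker_trivial h_inj (subgroup0 sI).
have := (has_index_img (subgroup_whole W) sI (fun _ _ => I) ker_h q).2 iota_index.
apply: has_index_ext => // w; split.
- by case=> _ [[v [_ ->]] ->]; rewrite h_iota; exists (f v); split=> //; exists v.
- by case=> _ [[v [_ ->]] ->]; exists (iota v); split; [exists v | rewrite h_iota].
Qed.

Lemma has_index_intertwine c :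
  has_index whole (img f whole) c <-> has_index whole (img h whole) c.
Proof.
have q_gt0 : (0 < q)%N by apply: has_index_gt0 iota_index.
rewrite index_If; split=> hc.
- have hW := has_index_mul (subgroup_whole W) sI If_I (fun _ _ => I) iota_index hc.
  have [a [b [ha hb e]]] := has_index_factor (subgroup_whole W) sH sIf If_H (fun _ _ => I) hW.
  rewrite (has_index_unique sIf hb index_H_If) in e.
  by rewrite (_ : c = a) //; apply/eqP; rewrite -(eqn_pmul2l q_gt0) e mulnC.
- have hW := has_index_mul (subgroup_whole W) sH If_H (fun _ _ => I) hc index_H_If.
  have [a [b [ha hb e]]] := has_index_factor (subgroup_whole W) sI sIf If_I (fun _ _ => I) hW.
  rewrite (has_index_unique sI ha iota_index) in e.
  by rewrite (_ : c = b) //; apply/eqP; rewrite -(eqn_pmul2l q_gt0) -e mulnC.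
Qed.
End Intertwine.

(** * Row spaces and their index over a PID *)

Section RowSpan.
Variable R : comPzRingType.

Definition rowspan k m (A : 'M[R]_(k, m)) (v : 'rV[R]_m) := exists u : 'rV_k, v = u *m A.

Lemma subgroup_rowspan k m (A : 'M[R]_(k, m)) : subgroup (rowspan A).
Proof.
split; first by exists 0; rewrite mul0mx.
by move=> _ _ [u ->] [w ->]; exists (u - w); rewrite mulmxBl.
Qed.

Lemma rowspan_mulmx_linv k m (E E' : 'M[R]_k) (A : 'M[R]_(k, m)) :
  E' *m E = 1%:M -> forall v, rowspan (E *m A) v <-> rowspan A v.
Proof.
move=> EE' v; split; first by case=> u ->; exists (u *m E); rewrite mulmxA.
by case=> u ->; exists (u *m E'); rewrite -mulmxA (mulmxA E') EE' mul1mx.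
Qed.

Lemma subgroup_principal_ideal (x : R) : subgroup (principal_ideal x).
Proof.
split; first by exists 0; rewrite mul0r.
by move=> _ _ [a ->] [b ->]; exists (a - b); rewrite mulrBl.
Qed.

Lemma has_index_rowspan_scalar (x : R) n :
  has_index whole (principal_ideal x) n <-> has_index whole (rowspan (x%:M : 'M_1)) n.
Proof.
have ker_scalar a : True -> (a%:M : 'M[R]_1) = 0 -> principal_ideal x a.
  by move=> _ /matrixP/(_ 0 0); rewrite !mxE mulr1n => ->; exists 0; rewrite mul0r.
have eH (y : 'M_1) : img (@scalar_mx R 1) whole y <-> True.
  by split=> // _; exists (y 0 0); split=> //; exact: mx11_scalar.
have eK (y : 'M_1) : img (@scalar_mx R 1) (principal_ideal x) y <-> rowspan x%:M y.
  split; first by case=> _ [[r ->] ->]; exists r%:M; rewrite -scalar_mxM.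
  case=> u ->; exists (u 0 0 * x); split; first by exists (u 0 0).
  by rewrite {1}[u]mx11_scalar -scalar_mxM.
rewrite -(has_index_img (subgroup_whole R) (subgroup_principal_ideal x) (fun _ _ => I) ker_scalar).
by split; apply: has_index_ext => y; rewrite ?eH ?eK.
Qed.
End RowSpan.

Section PID.
Variable R : idomainType.

Lemma has_index_scalar_mul (a b : R) n : a != 0 ->
  has_index whole (rowspan ((a * b)%:M : 'M_1)) n ->
  exists n1 n2, [/\ has_index whole (rowspan (a%:M : 'M_1)) n1,
                   has_index whole (rowspan (b%:M : 'M_1)) n2 & n = (n1 * n2)%N].
Proof.
move=> a0 hn.
have mul_scalarC (u : 'rV[R]_1) : u *m (a * b)%:M = u *m b%:M *m a%:M.
  by rewrite -mulmxA -scalar_mxM mulrC.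
have ab_a (v : 'rV[R]_1) : rowspan (a * b)%:M v -> rowspan a%:M v.
  by case=> u ->; exists (u *m b%:M); rewrite mul_scalarC.
have [n1 [n2 [h1 h2 ->]]] := has_index_factor (subgroup_whole _) (subgroup_rowspan _)
  (subgroup_rowspan _) ab_a (fun _ _ => I) hn.
exists n1, n2; split=> //.
have ker_a (v : 'rV[R]_1) : True -> mulmxr a%:M v = 0 -> rowspan b%:M v.
  move=> _ /eqP; rewrite /= mul_mx_scalar scalemx_eq0 (negPf a0) => /eqP ->.
  exact: subgroup0 (subgroup_rowspan _).
rewrite -(has_index_img (subgroup_whole _) (subgroup_rowspan _) (fun _ _ => I) ker_a).
apply: has_index_ext h2 => v; split.
- by case=> u ->; exists u.
- by case=> u [_ ->]; exists u.
- by case=> u ->; exists (u *m b%:M); split; [exists u | rewrite mul_scalarC].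
- by case=> _ [[u ->] ->]; exists u; rewrite mul_scalarC.
Qed.

Section Block.
Variables (m : nat) (g : R) (r : 'rV[R]_m) (D : 'M[R]_m).
Hypothesis g0 : g != 0.

Let T := block_mx (g%:M : 'M_1) r 0 D.
Let top_in_g (v : 'rV[R]_(1 + m)) := rowspan (g%:M : 'M_1) (lsubmx v).
Let shift : {additive 'rV[R]_m -> 'rV[R]_(1 + m)} := mulmxr (row_mx 0 1%:M).

Let shiftE z : shift z = row_mx 0 z.
Proof. by rewrite /= mul_mx_row mulmx0 mulmx1. Qed.

Let T_mul (u : 'rV[R]_(1 + m)) : u *m T = row_mx (lsubmx u *m g%:M) (lsubmx u *m r + rsubmx u *m D).
Proof. by rewrite -{1}[u]hsubmxK mul_row_block mulmx0 addr0. Qed.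

Let subgroup_top_in_g : subgroup top_in_g.
Proof.
split; first by rewrite /top_in_g linear0; exact: subgroup0 (subgroup_rowspan _).
move=> x y hx hy; have := subgroupB (subgroup_rowspan (g%:M : 'M_1)) hx hy.
by rewrite /top_in_g linearB.
Qed.

Let has_index_top_in_g a :
  has_index whole (rowspan (g%:M : 'M_1)) a -> has_index whole top_in_g a.
Proof.
have ker_l x : True -> lsubmx x = 0 -> top_in_g x.
  by move=> _ e; rewrite /top_in_g e; exact: subgroup0 (subgroup_rowspan _).
rewrite -(has_index_img (f := @lsubmx R 1 1 m) (subgroup_whole _) subgroup_top_in_g
  (fun _ _ => I) ker_l).
apply: has_index_ext => y; split=> //.
- by move=> _; exists (row_mx y 0); split=> //; exact: (esym (row_mxKl _ _)).
- move=> hy; exists (row_mx y 0); split; last exact: (esym (row_mxKl _ _)).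
  by rewrite /top_in_g row_mxKl.
- by case=> x [hx ->].
Qed.

(* [top_in_g = shift R^m + R^(1+m) T], and since [g != 0] the row span of [T]
   meets [shift R^m] in [shift (R^m D)]. *)
Let has_index_rowspan_in_top b :
  has_index whole (rowspan D) b -> has_index top_in_g (rowspan T) b.
Proof.
have ker_shift x : True -> shift x = 0 -> rowspan D x.
  rewrite shiftE => _ /(congr1 rsubmx); rewrite row_mxKr linear0 => ->.
  exact: subgroup0 (subgroup_rowspan _).
rewrite -(has_index_img (subgroup_whole _) (subgroup_rowspan D) (fun _ _ => I) ker_shift).
move=> hb; apply: (has_index_restrict (subgroup_img shift (subgroup_whole _)) (subgroup_rowspan T)).
- by move=> _ [z [_ ->]]; rewrite /top_in_g shiftE row_mxKl; exact: subgroup0 (subgroup_rowspan _).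
- move=> v [t et]; exists (shift (rsubmx v - t *m r)); split; first by eexists.
  exists (row_mx t 0); rewrite T_mul row_mxKl row_mxKr mul0mx addr0 shiftE -et.
  by rewrite -{1}[v]hsubmxK opp_row_mx add_row_mx oppr0 addr0 opprB addrC subrK.
apply: has_index_ext hb => // y; split.
- case=> _ [[u ->] ->]; split; first by exists (u *m D).
  by exists (row_mx 0 u); rewrite T_mul row_mxKl row_mxKr !mul0mx add0r shiftE.
- case=> [[z [_ ->]] [w]]; rewrite shiftE T_mul => /eq_row_mx [e1 e2].
  have lw0 : lsubmx w = 0.
    by move/esym/eqP: e1; rewrite mul_mx_scalar scalemx_eq0 (negPf g0) => /eqP.
  by exists z; split=> //; exists (rsubmx w); rewrite e2 lw0 mul0mx add0r.
Qed.

Lemma has_index_block a b :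
  has_index whole (rowspan (g%:M : 'M_1)) a -> has_index whole (rowspan D) b ->
  has_index whole (rowspan (block_mx (g%:M : 'M_1) r 0 D)) (a * b)%N.
Proof.
move=> ha hb; have T_top v : rowspan T v -> top_in_g v.
  by case=> u ->; rewrite /top_in_g T_mul row_mxKl; exists (lsubmx u).
exact (has_index_mul (subgroup_whole _) subgroup_top_in_g T_top (fun _ _ => I)
  (has_index_top_in_g ha) (has_index_rowspan_in_top hb)).
Qed.
End Block.

Hypothesis R_pid : is_PID R.

Lemma bezout (a b : R) :
  exists u v a' b' g, [/\ g = u * a + v * b, a = a' * g & b = b' * g].
Proof.
pose I y := exists r s, y = r * a + s * b.
have I_ideal : is_ideal I.
  split.
  - by exists 0, 0; rewrite !mul0r addr0.
  - by move=> _ _ [r [s ->]] [r' [s' ->]]; exists (r + r'), (s + s'); ring.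
  - by move=> _ [r [s ->]]; exists (- r), (- s); ring.
  - by move=> t _ [r [s ->]]; exists (t * r), (t * s); ring.
have [g hg] := R_pid I_ideal.
have [u [v eg]] := (hg g).2 (ex_intro _ 1 (esym (mul1r g))).
have [|a' ea] := (hg a).1 (ex_intro _ 1 (ex_intro _ 0 _)); first by ring.
have [|b' eb] := (hg b).1 (ex_intro _ 0 (ex_intro _ 1 _)); first by ring.
by exists u, v, a', b', g.
Qed.

(* [E] acts on rows [0] and [j] as [[u, v], [-b', a']], with inverse [[a', -v], [b', u]],
   where [u a + v b = g], [a = a' g], [b = b' g] for [a, b] the entries in column [0]. *)
Lemma clear_entry m (A : 'M[R]_m.+1) (j : 'I_m.+1) : j != 0 ->
  exists E E' : 'M[R]_m.+1, [/\ E' *m E = 1%:M, (E *m A) j 0 = 0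
     & forall i, i != 0 -> i != j -> row i (E *m A) = row i A].
Proof.
move=> j0; have [u [v [a' [b' [g [eg ea eb]]]]]] := bezout (A 0 0) (A j 0).
have [g0 | gn0] := eqVneq g 0.
  exists 1%:M, 1%:M; split; first by rewrite mulmx1.
  - by rewrite mul1mx eb g0 mulr0.
  - by move=> i _ _; rewrite mul1mx.
have uv1 : u * a' + v * b' = 1 by apply: (mulIf gn0); rewrite mul1r {2}eg ea eb; ring.
pose e (q : 'I_m.+1) : 'rV[R]_m.+1 := delta_mx 0 q.
have eM n q (M : 'M[R]_(m.+1, n)) : e q *m M = row q M by rewrite rowE.
pose E := \matrix_p (if p == 0 then u *: e 0 + v *: e j
   else if p == j then (- b') *: e 0 + a' *: e j else e p).
pose E' := \matrix_p (if p == 0 then a' *: e 0 - v *: e j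
   else if p == j then b' *: e 0 + u *: e j else e p).
have rowE p : row p E = if p == 0 then u *: e 0 + v *: e j
   else if p == j then (- b') *: e 0 + a' *: e j else e p by rewrite rowK.
have rowE' p : row p E' = if p == 0 then a' *: e 0 - v *: e j
   else if p == j then b' *: e 0 + u *: e j else e p by rewrite rowK.
exists E, E'; split.
- apply/row_matrixP => p; rewrite row_mul rowE' row1 -/(e p).
  have [-> | p0] := eqVneq p 0.
    rewrite mulmxBl -!scalemxAl !eM !rowE eqxx (negPf j0) eqxx.
    apply/matrixP => x y; rewrite !mxE.
    by rewrite -[RHS]mul1r -uv1; ring.
  have [-> | pj] := eqVneq p j.
    rewrite mulmxDl -!scalemxAl !eM !rowE eqxx (negPf j0) eqxx.
    apply/matrixP => x y; rewrite !mxE.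
    by rewrite -[RHS]mul1r -uv1; ring.
  by rewrite eM rowE (negPf p0) (negPf pj).
- rewrite (_ : (E *m A) j 0 = row j (E *m A) 0 0); last by rewrite [RHS]mxE.
  rewrite row_mul rowE (negPf j0) eqxx.
  by rewrite mulmxDl -!scalemxAl !eM !mxE ea eb; ring.
- by move=> i i0 ij; rewrite row_mul rowE (negPf i0) (negPf ij) eM.
Qed.

Lemma clear_column m (A : 'M[R]_m.+1) : exists E E' : 'M[R]_m.+1,
  E' *m E = 1%:M /\ forall i : 'I_m.+1, i != 0 -> (E *m A) i 0 = 0.
Proof.
suff clear_upto k : (k <= m)%N -> exists E E' : 'M[R]_m.+1, E' *m E = 1%:M /\
    forall i : 'I_m.+1, i != 0 -> (i <= k)%N -> (E *m A) i 0 = 0.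
  have [E [E' [EE' E0]]] := clear_upto m (leqnn m).
  by exists E, E'; split=> // i i0; apply: E0 => //; rewrite -ltnS.
elim: k => [|k IH] km.
  exists 1%:M, 1%:M; split=> [|i]; first by rewrite mulmx1.
  by rewrite leqn0 -(inj_eq (@ord_inj _)) => /negPf ->.
have [E [E' [EE' E0]]] := IH (ltnW km).
pose j : 'I_m.+1 := inord k.+1.
have vj : nat_of_ord j = k.+1 by rewrite inordK // ltnS.
have j0 : j != 0 by rewrite -(inj_eq (@ord_inj _)) vj.
have [F [F' [FF' Fj Fi]]] := clear_entry (E *m A) j0.
exists (F *m E), (E' *m F'); split; first by rewrite mulmxA -(mulmxA E') FF' mulmx1.
move=> i i0 ik; rewrite -mulmxA; have [-> // | ij] := eqVneq i j.
rewrite (_ : _ i 0 = row i (F *m (E *m A)) 0 0); last by rewrite [RHS]mxE.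
rewrite Fi // mxE E0 //.
by move: ik; rewrite leq_eqVlt ltnS -vj (inj_eq (@ord_inj _)) (negPf ij).
Qed.

Lemma block_triangular m (A : 'M[R]_(1 + m)) :
  exists (E E' : 'M[R]_(1 + m)) (g : R) (r : 'rV[R]_m) (D : 'M[R]_m),
    E' *m E = 1%:M /\ E *m A = block_mx (g%:M : 'M_1) r 0 D.
Proof.
have [E [E' [EE' E0]]] := clear_column A.
set A1 : 'M_(1 + m) := E *m A in E0 *.
have A1_def : A1 = E *m A by [].
clearbody A1.
exists E, E', (A1 0 0), (ursubmx A1), (drsubmx A1); split=> //.
have l0 : lshift m (0 : 'I_1) = 0 by apply: val_inj.
rewrite -A1_def -[LHS]submxK; congr block_mx.
- by rewrite [LHS]mx11_scalar !mxE l0.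
- apply/matrixP => i j; rewrite !mxE (ord1 j) l0; apply: E0.
  by rewrite -(inj_eq (@ord_inj _)).
Qed.

Lemma has_index_rowspan_det m (A : 'M[R]_m) n : \det A != 0 ->
  has_index whole (rowspan ((\det A)%:M : 'M_1)) n -> has_index whole (rowspan A) n.
Proof.
elim: m A n => [|m IH] A n dA hn.
  rewrite det_mx00 in hn.
  have -> : n = 1%N.
    apply: (has_index_unique (subgroup_rowspan _) hn).
    apply: has_index_ext (has_index_refl (subgroup_whole _)) => // v.
    by split=> // _; exists v; rewrite mulmx1.
  apply: has_index_ext (has_index_refl (subgroup_whole _)) => // v.
  by split=> // _; exists 0; rewrite mul0mx thinmx0.
have [E [E' [g [r [D [EE' EA]]]]]] := block_triangular A.
have detEE' : \det E' * \det E = 1 by rewrite -det_mulmx EE' det1.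
have detEA : \det E * \det A = g * \det D by rewrite -det_mulmx EA det_ublock det_scalar1.
have /andP [g0 dD] : (g != 0) && (\det D != 0).
  rewrite -negb_or -mulf_eq0 -detEA mulf_neq0 //; apply/eqP => dE0.
  by move: detEE'; rewrite dE0 mulr0 => /eqP; rewrite eq_sym oner_eq0.
have {}hn : has_index whole (rowspan ((g * \det D)%:M : 'M_1)) n.
  apply: has_index_ext hn => // v.
  rewrite -detEA (_ : (\det E * \det A)%:M = (\det E)%:M *m (\det A)%:M :> 'M_1).
    by apply: iff_sym; apply: (rowspan_mulmx_linv (E' := (\det E')%:M)); rewrite -scalar_mxM detEE'.
  exact: scalar_mxM.
have [n1 [n2 [h1 h2 ->]]] := has_index_scalar_mul g0 hn.
have := has_index_block r g0 h1 (IH D n2 dD h2).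
by rewrite -EA; apply: has_index_ext => // v; exact: rowspan_mulmx_linv EE' v.
Qed.
End PID.

(** * Finite index subrings of products of PIDs *)

Section FiniteIndexSubring.
Variables (B : comPzRingType) (n : nat) (R : 'I_n -> idomainType).
Variable phi : forall i, {rmorphism B -> R i}.
Hypothesis phi_inj : forall a b : B, (forall i, phi i a = phi i b) -> a = b.
Variables (k : nat) (F : 'I_k -> forall i, R i).
Hypothesis F_cover :
  forall y : forall i, R i, exists (j : 'I_k) (b : B), forall i, y i = F j i + phi i b.
Variable d : B.
Hypothesis d_nzd : non_zerodivisor d.

(* Only the factors with [phi i d != 0] are kept; as [d] is a non-zerodivisor of [B],
   the embedding of [B^m] stays injective ([embed_inj]). *)
Local Notation J := {i : 'I_n | phi i d != 0}.

Lemma exists_extension (y : forall j : J, R (val j)) :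
  exists z : forall i, R i, forall j : J, z (val j) = y j.
Proof.
have [z zP] : exists z : forall i, R i, forall i (h : phi i d != 0), z i = y (exist _ i h).
  apply: (@dependent_choice _ R (fun i r => forall h, r = y (exist _ i h))) => i.
  have [h0 | nh] := orP (orbN (phi i d != 0)); last by exists 0 => h; rewrite h in nh.
  by exists (y (exist _ i h0)) => h; rewrite (bool_irrelevance h h0).
by exists z => -[i h]; exact: zP.
Qed.

Definition rV_at m (j : J) : zmodType := 'rV[R (val j)]_m.

Definition embed m (v : 'rV[B]_m) : zprod (rV_at m) := [ffun j => map_mx (phi (val j)) v].

Fact embed_is_zmod_morphism m : zmod_morphism (@embed m).
Proof. by move=> v w; apply/ffunP => j; rewrite !ffunE map_mxB. Qed.
HB.instance Definition _ m := GRing.isZmodMorphism.Build _ _ (@embed m) (@embed_is_zmod_morphism m).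

Definition mulmx_at m (A : 'M[B]_m) (w : zprod (rV_at m)) : zprod (rV_at m) :=
  [ffun j => (w j : 'rV_m) *m map_mx (phi (val j)) A].

Fact mulmx_at_is_zmod_morphism m (A : 'M[B]_m) : zmod_morphism (mulmx_at A).
Proof. by move=> v w; apply/ffunP => j; rewrite !ffunE mulmxBl. Qed.
HB.instance Definition _ m A :=
  GRing.isZmodMorphism.Build _ _ (@mulmx_at m A) (mulmx_at_is_zmod_morphism A).

Lemma embed_inj m : injective (@embed m).
Proof.
apply: raddf_inj => v /ffunP v0; apply/matrixP => a l; rewrite mxE (ord1 a).
apply: d_nzd; apply: phi_inj => i; rewrite rmorph0 rmorphM.
have [di0 | di] := eqVneq (phi i d) 0; first by rewrite di0 mul0r.
have := v0 (exist _ i di); rewrite ffunE zprod0E => /matrixP/(_ 0 l).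
by rewrite !mxE => ->; rewrite mulr0.
Qed.

Lemma embed_has_index m : exists q, has_index whole (img (@embed m) whole) q.
Proof.
pose rep (jj : {ffun 'I_m -> 'I_k}) : zprod (rV_at m) :=
  [ffun j => \row_l F (jj l) (val j)].
apply: (has_index_of_cover (subgroup_img _ (subgroup_whole _)) (f := rep)) => w _.
have [jb jbP] : exists jb : 'I_m -> 'I_k * B, forall l (j : J),
    (w j : 'rV_m) 0 l = F (jb l).1 (val j) + phi (val j) (jb l).2.
  apply: (@dependent_choice _ (fun=> ('I_k * B)%type)
    (fun l jb => forall j : J, (w j : 'rV_m) 0 l = F jb.1 (val j) + phi (val j) jb.2)) => l.
  have [z zP] := exists_extension (fun j => (w j : 'rV_m) 0 l).
  by have [j [b hb]] := F_cover z; exists (j, b) => j'; rewrite -zP hb.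
exists [ffun l => (jb l).1]; exists (\row_l (jb l).2); split=> //.
apply/ffunP => j; rewrite zprodBE !ffunE; apply/matrixP => a l.
by rewrite !mxE (ord1 a) jbP ffunE addrAC subrr add0r.
Qed.

Lemma has_index_rowspan_prod m (A : 'M[B]_m) c : \det A = d ->
  has_index whole (rowspan A) c <->
  has_index (prod_pred (fun _ => whole))
    (prod_pred (fun j : J => rowspan (map_mx (phi (val j)) A))) c.
Proof.
move=> detA; have [q hq] := embed_has_index m.
have mulmx_at_inj : injective (mulmx_at A).
  apply: raddf_inj => w /ffunP w0; apply/ffunP => j; rewrite zprod0E.
  have := congr1 (mulmxr (\adj (map_mx (phi (val j)) A))) (w0 j).
  rewrite /= ffunE zprod0E mul0mx -mulmxA mul_mx_adj mul_mx_scalar det_map_mx detA.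
  by move/eqP; rewrite scalemx_eq0 (negPf (valP j)) => /eqP.
have mulmx_at_embed v : mulmx_at A (embed v) = embed (mulmxr A v).
  by apply/ffunP => j; rewrite !ffunE map_mxM.
have rowspanE v : img (mulmxr A) whole v <-> rowspan A v.
  by split=> [[u [_ ->]] | [u ->]]; exists u.
have mulmx_atE w :
    img (mulmx_at A) whole w <-> prod_pred (fun j => rowspan (map_mx (phi (val j)) A)) w.
  split=> [[u [_ ->]] j | wP]; first by rewrite ffunE; exists (u j).
  have [u uP] := dependent_choice wP.
  by exists [ffun j => u j]; split=> //; apply/ffunP => j; rewrite !ffunE uP.
rewrite -(has_index_iff c (fun _ => iff_refl True) rowspanE).
have wholeE (w : zprod (rV_at m)) : True <-> prod_pred (fun _ => whole) w by [].
rewrite -(has_index_iff c wholeE mulmx_atE).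
exact (has_index_intertwine (f := mulmxr A) (@embed_inj m) mulmx_at_inj mulmx_at_embed hq c).
Qed.

Hypothesis R_pid : forall i, is_PID (R i).

Lemma has_index_rowspan_det_subring m (A : 'M[B]_m) c : \det A = d ->
  has_index whole (principal_ideal d) c -> has_index whole (rowspan A) c.
Proof.
move=> detA /has_index_rowspan_scalar /(has_index_rowspan_prod c (det_scalar1 d)) hc.
pose d_at (j : J) := map_mx (phi (val j)) (d%:M : 'M_1).
have [nj hnj ->] := (has_index_prod_pred (fun j => subgroup_whole _)
  (fun j => subgroup_rowspan (d_at j)) c).1 hc.
apply/(has_index_rowspan_prod _ detA); apply: has_index_prod_pred_mul => j.
have detAj : \det (map_mx (phi (val j)) A) = phi (val j) d by rewrite det_map_mx detA.
apply (has_index_rowspan_det (@R_pid (val j))); rewrite detAj; first exact: valP j.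
by have := hnj j; rewrite /d_at map_scalar_mx.
Qed.
End FiniteIndexSubring.

(** * Presentations and Fitting ideals *)

Lemma minor_ideal_square (B : comPzRingType) m (A : 'M[B]_m) b :
  minor_ideal A b <-> principal_ideal (\det A) b.
Proof.
split=> [[c ->] | [r ->]].
  exists (\sum_f c f * \det (rowsub f (1%:M : 'M[B]_m))); rewrite mulr_suml.
  by apply: eq_bigr => f _; rewrite rowsubE det_mulmx mulrA.
exists [ffun f => if f == [ffun i => i] then r else 0].
rewrite (bigD1 [ffun i => i]) //= ffunE eqxx big1 ?addr0.
  by congr (_ * \det _); apply/matrixP => i j; rewrite mxE ffunE.
by move=> f /negPf fid; rewrite ffunE fid mul0r.
Qed.

Lemma non_zerodivisor_dvd (B : comPzRingType) (a x : B) :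
  principal_ideal a x -> non_zerodivisor x -> non_zerodivisor a.
Proof. by move=> [r ->] x_nzd b ab0; apply: x_nzd; rewrite -mulrA ab0 mulr0. Qed.

Lemma has_index_quot_card (B : comPzRingType) (x : B) c :
  quot_card x c -> has_index whole (principal_ideal x) c.
Proof.
case=> s [_ s_inj s_cover]; exists 'I_c, (fun i : 'I_c => s`_i); split=> //.
- by rewrite card_ord.
- by move=> i j /(s_inj _ _ (ltn_ord i) (ltn_ord j)) /val_inj.
- by move=> b _; have [i ic hi] := s_cover b; exists (Ordinal ic).
Qed.

Lemma has_card_of_presentation (B : comPzRingType) (N : lmodType B) k m
    (A : 'M[B]_(k, m)) (g : {linear 'rV[B]_m -> N}) c :
  is_presentation A g -> has_index whole (rowspan A) c -> has_card N c.
Proof.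
case=> g_surj g_ker /has_index_ord [s [_ s_inj s_cover]].
exists [seq g (s i) | i <- enum 'I_c]; split; last split.
- rewrite map_inj_uniq ?enum_uniq // => i j gij.
  by apply: s_inj; apply/g_ker; rewrite linearB /= gij subrr.
- move=> y; have [v <-] := g_surj y; have [i ri] := s_cover v I.
  apply/mapP; exists i; first by rewrite mem_enum.
  by apply/eqP; rewrite -subr_eq0 -linearB; apply/eqP/g_ker.
- by rewrite size_map size_enum_ord.
Qed.

Unset Implicit Arguments.
Set Strict Implicit.

Theorem lemma2p4 (B : comPzRingType) (n : nat) (R : 'I_n -> idomainType)
  (phi : forall i, {rmorphism B -> R i}) (N : lmodType B) (x : B) (c : nat) :
  (forall i, is_PID (R i)) ->
  finite_index_subring_of_prod phi ->
  quadratically_presented N ->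
  Fitt0_is N (principal_ideal x) ->
  non_zerodivisor x ->
  quot_card x c ->
  has_card N c.
Proof.
move=> R_pid [phi_inj [k [F F_cover]]] [m [A [g [_ pres]]]] fitt x_nzd x_card.
have detA_x b : principal_ideal (\det A) b <-> principal_ideal x b.
  by rewrite -minor_ideal_square; exact: fitt pres b.
have detA_nzd : non_zerodivisor (\det A).
  by apply: non_zerodivisor_dvd x_nzd; apply/detA_x; exists 1; rewrite mul1r.
have detA_index : has_index whole (principal_ideal (\det A)) c.
  by rewrite (has_index_iff c (fun _ => iff_refl True) detA_x); exact: has_index_quot_card.
apply: has_card_of_presentation pres _.
exact (has_index_rowspan_det_subring phi_inj F_cover detA_nzd R_pid erefl detA_index).
Qed.
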